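(* Let $n_1,\dots,n_l\ge2$ be integers, and suppose there are integers $1\le j\le k\le l-1$ such that $n_j\ge3$ and $u_j+u_{j+1}+v_j+v_{j+1}\le q$. Let $(n_1',\dots,n_l')$ be obtained from $(n_1,\dots,n_l)$ by replacing $n_k$ by $n_k+1$, and let $q',u_i',v_i'$ be the corresponding quantities for $(n_1',\dots,n_l')$. Then $u_j'+u_{j+1}'+v_j'+v_{j+1}'\le q'$.
   Context: For integers $m_1,\dots,m_r\ge2$, $|[m_1,\dots,m_r]|$ is the absolute value of the determinant of the tridiagonal $r\times r$ matrix with diagonal entries $-m_1,\dots,-m_r$ and $1$'s directly above and below the diagonal (empty bracket $=1$). For $(n_1,\dots,n_l)$: $q=|[n_1,\dots,n_l]|$; $u_0=0$, $u_1=1$, $u_s=|[n_1,\dots,n_{s-1}]|$ for $2\le s\le l+1$; $v_s=|[n_{s+1},\dots,n_l]|$ for $0\le s\le l-1$, $v_l=1$, $v_{l+1}=0$. *)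

From HB Require Import structures.
From mathcomp Require Import all_boot all_order all_algebra.
Set Implicit Arguments. Unset Strict Implicit. Unset Printing Implicit Defensive.
Import Order.TTheory GRing.Theory Num.Theory.

(* Sequences are 0-indexed: the paper's n_i is [nth 0 ns i.-1]. *)

Definition tridiag (s : seq nat) : 'M[int]_(size s) :=
  \matrix_(i < size s, j < size s)
    (if i == j then - ((nth 0%N s i)%:Z)
     else if (i.+1 == j :> nat) || (j.+1 == i :> nat) then 1 else 0)%R.

(* |[m_1,...,m_r]| ; the empty bracket is the 0x0 determinant = 1 *)
Definition bracket (s : seq nat) : nat := absz (\det (tridiag s))%R.

Definition qq (ns : seq nat) : nat := bracket ns.

(* u_0 = 0, u_1 = 1, u_s = |[n_1,...,n_{s-1}]| for 2 <= s <= l+1 *)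
Definition uu (ns : seq nat) (s : nat) : nat :=
  match s with
  | 0 => 0
  | 1 => 1
  | _ => bracket (take s.-1 ns)
  end.

(* v_s = |[n_{s+1},...,n_l]| for 0 <= s <= l-1, v_l = 1, v_{l+1} = 0 *)
Definition vv (ns : seq nat) (s : nat) : nat :=
  if s < size ns then bracket (drop s ns)
  else if s == size ns then 1 else 0.

(* Expanding the tridiagonal determinant along its first row identifies every bracket
   with a continuant K, defined by K [::] = 1 and K (m :: t) = m K t - K (behead t).
   Writing ns = P ++ x :: R with x = n_j, the four quantities are K P, K (P ++ [:: x]),
   K R and K (behead R), while q = K (P ++ [:: x]) K R - K P K (behead R).  Since K is
   affine in each entry, increasing n_k changes both sides of the inequality by explicit
   amounts: for k = j the right side gains K P K R >= K P, which is what the left side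
   gains; for k > j, if R = A ++ z :: B and z is increased, the left side gains
   X + Y and the right side K (P ++ [:: x]) X - K P Y, where X = K A K B and
   Y = K (behead A) K B satisfy 0 <= Y <= X, and n_j >= 3 gives
   K (P ++ [:: x]) >= K P + 2, which is enough. *)
From HB Require Import structures.
From mathcomp Require Import all_boot all_order all_algebra.
From mathcomp Require Import ring zify.
Import Order.TTheory GRing.Theory Num.Theory.

Local Open Scope ring_scope.

Fixpoint cont (s : seq nat) : int :=
  match s with
  | [::] => 1
  | m :: t => m%:Z * cont t - (if t is _ :: t' then cont t' else 0)
  end.

(* [cont (behead s)], except that the empty sequence gets 0 (the paper's v_{l+1} = 0). *)
Definition cont_tail (s : seq nat) : int := if s is _ :: t then cont t else 0.

Lemma cont_nil : cont [::] = 1. Proof. by []. Qed.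
Lemma cont_cons m t : cont (m :: t) = m%:Z * cont t - cont_tail t.
Proof. by []. Qed.
Lemma cont_tail_nil : cont_tail [::] = 0. Proof. by []. Qed.
Lemma cont_tail_cons m t : cont_tail (m :: t) = cont t. Proof. by []. Qed.

Arguments cont : simpl never.
Arguments cont_tail : simpl never.

Lemma tridiag_minor00 m t : row' 0 (col' 0 (tridiag (m :: t))) = tridiag t.
Proof.
by apply/matrixP => i j; rewrite !mxE /= (inj_eq (@lift_inj _ _)) /bump !add1n.
Qed.

Lemma det_tridiag_minor01 m m' t :
  \det (row' 0 (col' 1 (tridiag (m :: m' :: t)))) = \det (tridiag t).
Proof.
rewrite (expand_det_col _ ord0) big_ord_recl big1 => [|i _]; last first.
  by rewrite !mxE /= /bump /= mul0r.
rewrite addr0 !mxE /= mul1r /cofactor expr0 mul1r; congr (\det _).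
by apply/matrixP => i j; rewrite !mxE -val_eqE /= /bump /= !add1n !eqSS.
Qed.

Lemma det_tridiag_cons m t :
  \det (tridiag (m :: t)) =
    - m%:Z * \det (tridiag t) - (if t is _ :: t' then \det (tridiag t') else 0).
Proof.
rewrite (expand_det_row _ ord0) big_ord_recl /cofactor expr0 mul1r.
rewrite tridiag_minor00 {1}/tridiag mxE /=.
case: t => [|m' t']; first by rewrite big_ord0 addr0 ?subr0.
rewrite big_ord_recl big1 => [|i _]; last by rewrite {1}/tridiag mxE /= mul0r.
rewrite addr0 {1}/tridiag mxE /= mul1r.
have -> : lift ord0 (@ord0 (size t')) = 1 :> 'I_(size t').+2 by apply/val_inj.
by rewrite det_tridiag_minor01 expr1 mulN1r.
Qed.

Lemma det_tridiag s : \det (tridiag s) = (-1) ^+ size s * cont s.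
Proof.
elim: (size s).+1 {-2}s (ltnSn (size s)) => [|n IH] [|m t] //= hs;
  rewrite ?det_mx00 ?expr0 ?mul1r //.
rewrite det_tridiag_cons (IH t) // cont_cons.
case: t hs => [|m' t'] hs; first by rewrite /= expr0 expr1 cont_tail_nil; ring.
rewrite (IH t') ?cont_tail_cons /= ?exprS; last by move: hs => /=; lia.
ring.
Qed.

Lemma bracket_cont s : bracket s = `|cont s|%N.
Proof. by rewrite /bracket det_tridiag abszMsign. Qed.

Notation entries_ge2 s := (all (fun m => 2 <= m)%N s).

Lemma cont_tail_bounds s : entries_ge2 s -> 0 <= cont_tail s < cont s.
Proof.
elim: s => [|m t IH] //= /andP[hm /IH /andP[h0 h1]].
rewrite cont_cons cont_tail_cons; have : 2 <= m%:Z by rewrite lez_nat.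
nia.
Qed.

Lemma cont_gt0 s : entries_ge2 s -> 0 < cont s.
Proof. by move=> /cont_tail_bounds /andP[h0 h1]; lia. Qed.

Lemma cont_cat_succ A z B :
  cont (A ++ z.+1 :: B) = cont (A ++ z :: B) + cont A * cont B /\
  cont_tail (A ++ z.+1 :: B) = cont_tail (A ++ z :: B) + cont_tail A * cont B.
Proof.
elim: A => [|w T [IH1 IH2]] /=.
  by rewrite !cont_cons cont_tail_nil cont_nil -addn1 PoszD; split; ring.
by rewrite !cont_cons !cont_tail_cons IH1 IH2; split; ring.
Qed.

Lemma cont_rcons_succ P x : cont (rcons P x.+1) = cont (rcons P x) + cont P.
Proof. by have [] := cont_cat_succ P x [::]; rewrite !cats1 cont_nil mulr1. Qed.

Lemma cont_cat P x Q :
  cont (P ++ x :: Q) = cont (rcons P x) * cont Q - cont P * cont_tail Q /\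
  cont_tail (P ++ x :: Q) = cont_tail (rcons P x) * cont Q - cont_tail P * cont_tail Q.
Proof.
elim: P => [|w T [IH1 IH2]] /=.
  by rewrite !cont_cons cont_nil cont_tail_nil; split; ring.
by rewrite !cont_cons !cont_tail_cons IH1 IH2; split; ring.
Qed.

Lemma cont_rcons_ge P x : (3 <= x)%N -> entries_ge2 P -> cont P + 2 <= cont (rcons P x).
Proof.
move=> hx.
suff: entries_ge2 P -> 2 <= cont (rcons P x) - cont P /\
  cont_tail (rcons P x) - cont_tail P < cont (rcons P x) - cont P.
  by move=> h /h[h1 _]; lia.
elim: P => [|w T IH] /=.
  rewrite !cont_cons !cont_tail_cons cont_nil cont_tail_nil.
  have : 3 <= x%:Z by rewrite lez_nat.
  lia.
move=> /andP[hw /IH[h1 h2]]; rewrite !cont_cons !cont_tail_cons.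
have : 2 <= w%:Z by rewrite lez_nat.
split; nia.
Qed.

Lemma uu_cont ns s : uu ns s.+1 = `|cont (take s ns)|%N.
Proof. by case: s => [|s]; rewrite /uu ?take0 ?bracket_cont. Qed.

Lemma vv_cont ns s : vv ns s.+1 = `|cont_tail (drop s ns)|%N.
Proof.
rewrite /vv; case: (ltngtP s.+1 (size ns)) => hs.
- by rewrite [drop s _](drop_nth 0) 1?ltnW // cont_tail_cons bracket_cont.
- by rewrite drop_oversize.
- by rewrite [drop s _](drop_nth 0) -?hs // cont_tail_cons drop_oversize -?hs.
Qed.

Definition uv_le_q (ns : seq nat) (j : nat) : bool :=
  (uu ns j + uu ns j.+1 + vv ns j + vv ns j.+1 <= qq ns)%N.

Lemma uv_le_qE P x R : entries_ge2 (P ++ x :: R) ->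
  uv_le_q (P ++ x :: R) (size P).+1 =
    (cont P + cont (rcons P x) + cont R + cont_tail R <= cont (P ++ x :: R)).
Proof.
move=> hL; have := hL; rewrite all_cat /= => /and3P[hP hx hR].
have hPx : entries_ge2 (rcons P x) by rewrite all_rcons hx.
rewrite /uv_le_q /qq bracket_cont !uu_cont !vv_cont take_size_cat // drop_size_cat //.
rewrite -cat_rcons take_size_cat ?drop_size_cat ?size_rcons // cat_rcons.
rewrite cont_tail_cons -lez_nat !PoszD !gez0_abs //.
all: first [by apply/ltW/cont_gt0 | by case/andP: (cont_tail_bounds _ hR)].
Qed.

Lemma entries_ge2_cat_succ A z B :
  entries_ge2 (A ++ z :: B) -> entries_ge2 (A ++ z.+1 :: B).
Proof. by rewrite !all_cat /= => /and3P[-> /leqW -> ->]. Qed.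

Lemma uv_le_q_succ_at P x R : entries_ge2 (P ++ x :: R) ->
  uv_le_q (P ++ x :: R) (size P).+1 -> uv_le_q (P ++ x.+1 :: R) (size P).+1.
Proof.
move=> hL; have := hL; rewrite all_cat /= => /and3P[hP _ hR].
rewrite !uv_le_qE ?entries_ge2_cat_succ // !(proj1 (cont_cat P _ R)).
rewrite cont_rcons_succ; have := cont_gt0 _ hP; have := cont_gt0 _ hR; nia.
Qed.

Lemma uv_le_q_succ_after P x A z B : (3 <= x)%N ->
  entries_ge2 (P ++ x :: A ++ z :: B) ->
  uv_le_q (P ++ x :: A ++ z :: B) (size P).+1 ->
  uv_le_q (P ++ x :: A ++ z.+1 :: B) (size P).+1.
Proof.
move=> hx hL; have := hL; rewrite all_cat /= => /and3P[hP _].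
rewrite all_cat /= => /and3P[hA _ hB].
have hL' := entries_ge2_cat_succ (P ++ x :: A) z B; rewrite -!catA /= in hL'.
rewrite !uv_le_qE ?hL' // !(proj1 (cont_cat P x _)).
have [-> ->] := cont_cat_succ A z B.
have hP0 := cont_gt0 _ hP; have hB0 := cont_gt0 _ hB.
have hPx := cont_rcons_ge _ _ hx hP.
have /andP[hA0 hA1] := cont_tail_bounds _ hA.
set X := cont A * cont B; set Y := cont_tail A * cont B.
have hY : 0 <= Y <= X by apply/andP; split; nia.
have : X + Y <= cont (rcons P x) * X - cont P * Y by nia.
nia.
Qed.

Lemma split_at_nth {T : Type} (x0 : T) (s : seq T) i : (i < size s)%N ->
  exists P x R, s = P ++ x :: R /\ size P = i.
Proof.
move=> hi; exists (take i s), (nth x0 s i), (drop i.+1 s).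
by rewrite -drop_nth ?cat_take_drop ?size_takel // ltnW.
Qed.

Lemma nth_cat_size {T : Type} (x0 : T) P x R : nth x0 (P ++ x :: R) (size P) = x.
Proof. by rewrite nth_cat ltnn subnn. Qed.

Lemma set_nth_cat_size {T : Type} (x0 : T) P x y R :
  set_nth x0 (P ++ x :: R) (size P) y = P ++ y :: R.
Proof. by elim: P => //= a P ->. Qed.

Local Close Scope ring_scope.

Theorem lemma4p5 (ns : seq nat) (j k : nat) :
  all (fun m => 2 <= m) ns ->
  1 <= j -> j <= k -> k <= (size ns).-1 ->
  3 <= nth 0 ns j.-1 ->
  uu ns j + uu ns j.+1 + vv ns j + vv ns j.+1 <= qq ns ->
  let ns' := set_nth 0 ns k.-1 (nth 0 ns k.-1).+1 in
  uu ns' j + uu ns' j.+1 + vv ns' j + vv ns' j.+1 <= qq ns'.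
Proof.
move=> hall hj hjk hk hx H; cbv zeta.
have [Q [y [S [eQ hQ]]]] : exists Q y S, ns = Q ++ y :: S /\ size Q = k.-1.
  by apply: (split_at_nth 0); lia.
subst ns; rewrite -hQ nth_cat_size set_nth_cat_size.
have [ejk|hjk'] : j = k \/ j < k by lia.
  have ej : j = (size Q).+1 by lia.
  by rewrite ej in H *; apply: uv_le_q_succ_at.
have [P [x [A [eP hP]]]] : exists P x A, Q = P ++ x :: A /\ size P = j.-1.
  by apply: (split_at_nth 0); lia.
subst Q; rewrite -catA cat_cons; rewrite -catA cat_cons in hx hall H.
have ej : j = (size P).+1 by lia.
rewrite ej in H *; rewrite -hP nth_cat_size in hx.
exact: uv_le_q_succ_after.
Qed.
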